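(* Let $C>0$ and for each $A>1$ let $\mathcal{E}_A=\{(X,M): X=(\mathbf f,\mathbf g,\mathbf F,\mathbf G,\mathbf u,\mathbf v)\in\mathbb{R}^6,\ \mathbf u,\mathbf v>0,\ 1\le\mathbf u\mathbf v\le A,\ \mathbf f^2\le\mathbf F\mathbf v,\ \mathbf g^2\le\mathbf G\mathbf u,\ 0\le M\le1\}$ and let $\mathcal{B}_A:\mathcal{E}_A\to\mathbb{R}$ be functions such that (i) $0\le\mathcal{B}_A(X,M)\le CA\mathbf F^{1/2}\mathbf G^{1/2}$ on $\mathcal{E}_A$, and (ii) for all $(X,M),(X_1,M_1),(X_2,M_2)\in\mathcal{E}_A$ with $X=(X_1+X_2)/2$ and $\mathbf d:=M-(M_1+M_2)/2\ge0$, \[ \mathcal{B}_A(X,M)-\tfrac12\left(\mathcal{B}_A(X_1,M_1)+\mathcal{B}_A(X_2,M_2)\right)\ge\mathbf d\,|\mathbf f|\,|\mathbf g_1-\mathbf g_2|, \] where $\mathbf f$ is the first coordinate of $X$ and $\mathbf g_i$ the second coordinate of $X_i$. Fix $A>1$, $n\ge1$ and a dyadic interval $I_0\subset\mathbb{R}$, and suppose that for every $I\in\operatorname{chld}_k(I_0)$, $0\le k\le n$, points $(X_I,M_I)\in\mathcal{E}_A$, $X_I=(\mathbf f_I,\mathbf g_I,\mathbf F_I,\mathbf G_I,\mathbf u_I,\mathbf v_I)$, are given such that $X_I=(X_{I_1}+X_{I_2})/2$ for every $I\in\operatorname{chld}_k(I_0)$, $0\le k<n$, with children $I_1,I_2$;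 $M_I=(M_{I_1}+M_{I_2})/2$ for every such $I\neq I_0$; and $\mathbf d_{I_0}:=M_{I_0}-2^{-n}\sum_{I\in\operatorname{chld}_n(I_0)}M_I\ge0$. Then, with $A'=4.5A$, \[ \mathbf d_{I_0}\,|\mathbf f_{I_0}|\Bigl(2^{-n}\!\!\sum_{I\in\operatorname{chld}_n(I_0)}|\mathbf g_I-\mathbf g_{I_0}|\Bigr)\le 36\Bigl(\mathcal{B}_{A'}(X_{I_0},M_{I_0})-2^{-n}\!\!\sum_{I\in\operatorname{chld}_n(I_0)}\mathcal{B}_{A'}(X_I,M_I)\Bigr). \]
   Context: For a dyadic interval $I$, $\operatorname{chld}_0(I)=\{I\}$ and $\operatorname{chld}_k(I)$ is the set of the $2^k$ dyadic subintervals of $I$ of length $2^{-k}|I|$. Note $\mathcal{E}_A\subset\mathcal{E}_{A'}$ for $A\le A'$. *)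

From Stdlib Require Import Reals.
Open Scope R_scope.

Record pt := mkpt { pf : R; pg : R; pF : R; pG : R; pu : R; pv : R }.

Definition ptavg (X1 X2 : pt) : pt :=
  mkpt ((pf X1 + pf X2) / 2) ((pg X1 + pg X2) / 2) ((pF X1 + pF X2) / 2)
       ((pG X1 + pG X2) / 2) ((pu X1 + pu X2) / 2) ((pv X1 + pv X2) / 2).

Definition inE (A : R) (X : pt) (M : R) : Prop :=
  0 < pu X /\ 0 < pv X /\ 1 <= pu X * pv X /\ pu X * pv X <= A /\
  pf X ^ 2 <= pF X * pv X /\ pg X ^ 2 <= pG X * pu X /\ 0 <= M /\ M <= 1.

Fixpoint sumR (m : nat) (f : nat -> R) : R :=
  match m with O => 0 | S m' => sumR m' f + f m' end.

From Stdlib Require Import Reals Lra Lia Psatz.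
Open Scope R_scope.

(* Along a segment the mass can be taken affine, so the midpoint inequality with [d = 0]
   makes [B] midpoint concave there; since [B >= 0] it is concave (a negative defect of a
   midpoint-concave function would double under the doubling map [x |-> 2x mod 1]).

   Pick signs [s_i] on the leaves, nonnegative exactly where [g_i >= g_root], with
   [sum s_i = 0] and [sum s_i (g_i - g_root) = 1/2 sum |g_i - g_root|], and let [Y+], [Y-] be
   the means of the leaves with weights [1 + s_i/3] and [1 - s_i/3]. Then [X_root] is the
   midpoint of [Y+] and [Y-], whose [g]-coordinates differ by a third of the mean
   oscillation, so the midpoint inequality at the root bounds the left side by
   [3 (B(X_root) - (B(Y+) + B(Y-))/2)]. Computing [Y+-] bottom-up as iterated two-point
   convex combinations, concavity along each segment gives Jensen's inequality
   [B(Y+-) >= weighted leaf average of B], and the two weightings average to the plain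
   one. As the weights lie in [[2/3, 4/3]], each point of these segments has [u], [v] at
   most twice those of a convex combination of two sibling nodes, whose product is at
   most [9/8 A]: everything stays in [E_(9A/2)]. *)

Lemma pow2_pos m : 0 < 2 ^ m.
Proof. apply pow_lt; lra. Qed.

Lemma div_nonneg a b : 0 <= a -> 0 < b -> 0 <= a / b.
Proof. intros; unfold Rdiv; apply Rmult_le_pos; [|left; apply Rinv_0_lt_compat]; lra. Qed.

Definition doubling (x : R) : R := if Rle_dec x (1/2) then 2 * x else 2 * x - 1.

Section MidpointConcave.

Variable psi : R -> R.
Hypothesis psi_mid : forall x y, 0 <= x <= 1 -> 0 <= y <= 1 ->
  (psi x + psi y) / 2 <= psi ((x + y) / 2).
Hypothesis psi0 : psi 0 = 0.
Hypothesis psi1 : psi 1 = 0.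

Lemma doubling_mem x : 0 <= x <= 1 -> 0 <= doubling x <= 1.
Proof. unfold doubling; destruct (Rle_dec x (1/2)); lra. Qed.

(* [x] is the midpoint of [doubling x] and an endpoint, where [psi] vanishes. *)
Lemma psi_doubling x : 0 <= x <= 1 -> psi (doubling x) <= 2 * psi x.
Proof.
  intros Hx; unfold doubling; destruct (Rle_dec x (1/2)).
  - pose proof (psi_mid (2 * x) 0 ltac:(lra) ltac:(lra)).
    replace ((2 * x + 0) / 2) with x in H by field; lra.
  - pose proof (psi_mid (2 * x - 1) 1 ltac:(lra) ltac:(lra)).
    replace ((2 * x - 1 + 1) / 2) with x in H by field; lra.
Qed.

Lemma psi_iter_doubling k x : 0 <= x <= 1 ->
  0 <= Nat.iter k doubling x <= 1 /\ psi (Nat.iter k doubling x) <= 2 ^ k * psi x.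
Proof.
  intros Hx; induction k as [|k [Hmem Hle]]; simpl.
  - lra.
  - split; [now apply doubling_mem|].
    pose proof (psi_doubling _ Hmem); lra.
Qed.

Lemma midpoint_concave_nonneg K : (forall x, 0 <= x <= 1 -> - K <= psi x) ->
  forall x, 0 <= x <= 1 -> 0 <= psi x.
Proof.
  intros Hlow x Hx; apply Rnot_lt_le; intros Hneg.
  destruct (Pow_x_infinity 2 ltac:(rewrite Rabs_pos_eq; lra) ((K + 1) / - psi x)) as [k Hk].
  specialize (Hk k (le_n k)); rewrite Rabs_pos_eq in Hk by (apply pow_le; lra).
  destruct (psi_iter_doubling k x Hx) as [Hmem Hle].
  specialize (Hlow _ Hmem).
  assert (K + 1 <= 2 ^ k * - psi x).
  { apply Rge_le in Hk; unfold Rdiv in Hk.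
    apply (Rmult_le_compat_r (- psi x)) in Hk; [|lra].
    rewrite Rmult_assoc, Rinv_l in Hk; lra. }
  lra.
Qed.

End MidpointConcave.

Lemma midpoint_concave_concave (phi : R -> R) :
  (forall x y, 0 <= x <= 1 -> 0 <= y <= 1 -> (phi x + phi y) / 2 <= phi ((x + y) / 2)) ->
  (forall x, 0 <= x <= 1 -> 0 <= phi x) ->
  forall mu, 0 <= mu <= 1 -> mu * phi 1 + (1 - mu) * phi 0 <= phi mu.
Proof.
  intros Hmid Hnn mu Hmu.
  set (psi x := phi x - (x * phi 1 + (1 - x) * phi 0)).
  assert (Hpsi : 0 <= psi mu).
  { apply (midpoint_concave_nonneg psi) with (K := phi 0 + phi 1); auto; unfold psi.
    - intros x y Hx Hy; pose proof (Hmid x y Hx Hy); lra.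
    - lra.
    - lra.
    - intros x Hx; pose proof (Hnn x Hx); pose proof (Hnn 0 ltac:(lra));
        pose proof (Hnn 1 ltac:(lra)); nra. }
  unfold psi in Hpsi; lra.
Qed.

Definition comb (l : R) (P Q : pt) : pt :=
  mkpt (l * pf P + (1 - l) * pf Q) (l * pg P + (1 - l) * pg Q)
       (l * pF P + (1 - l) * pF Q) (l * pG P + (1 - l) * pG Q)
       (l * pu P + (1 - l) * pu Q) (l * pv P + (1 - l) * pv Q).

Lemma pt_ext P Q : pf P = pf Q -> pg P = pg Q -> pF P = pF Q -> pG P = pG Q ->
  pu P = pu Q -> pv P = pv Q -> P = Q.
Proof. destruct P, Q; simpl; intros; subst; reflexivity. Qed.

Lemma comb1 P Q : comb 1 P Q = P.
Proof. apply pt_ext; simpl; ring. Qed.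

Lemma comb0 P Q : comb 0 P Q = Q.
Proof. apply pt_ext; simpl; ring. Qed.

Lemma comb_midpoint x y P Q :
  comb ((x + y) / 2) P Q = ptavg (comb x P Q) (comb y P Q).
Proof. apply pt_ext; simpl; field. Qed.

Definition inE_infty (X : pt) (M : R) : Prop :=
  0 < pu X /\ 0 < pv X /\ 1 <= pu X * pv X /\
  pf X ^ 2 <= pF X * pv X /\ pg X ^ 2 <= pG X * pu X /\ 0 <= M /\ M <= 1.

Lemma inE_inE_infty A X M : inE A X M -> inE_infty X M.
Proof. unfold inE, inE_infty; tauto. Qed.

Lemma inE_infty_inE A X M : inE_infty X M -> pu X * pv X <= A -> inE A X M.
Proof. unfold inE, inE_infty; tauto. Qed.

Lemma inE_le A A' X M : A <= A' -> inE A X M -> inE A' X M.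
Proof. unfold inE; intros; intuition lra. Qed.

(* Convexity of [(f, F, v) |-> f^2 / v - F] on [v > 0]. *)
Lemma sq_le_mul_comb f1 f2 F1 F2 v1 v2 l :
  0 < v1 -> 0 < v2 -> f1 ^ 2 <= F1 * v1 -> f2 ^ 2 <= F2 * v2 -> 0 <= l <= 1 ->
  (l * f1 + (1 - l) * f2) ^ 2 <= (l * F1 + (1 - l) * F2) * (l * v1 + (1 - l) * v2).
Proof.
  intros Hv1 Hv2 H1 H2 Hl.
  assert (Hcross : 2 * f1 * f2 <= F1 * v2 + F2 * v1).
  { apply (Rmult_le_reg_r (v1 * v2)); [nra|].
    assert (F1 * v1 * v2 * v2 >= f1 ^ 2 * v2 * v2) by nra.
    assert (F2 * v2 * v1 * v1 >= f2 ^ 2 * v1 * v1) by nra.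
    pose proof (pow2_ge_0 (f1 * v2 - f2 * v1)); nra. }
  assert (0 <= l ^ 2 * (F1 * v1 - f1 ^ 2)) by (apply Rmult_le_pos; nra).
  assert (0 <= (1 - l) ^ 2 * (F2 * v2 - f2 ^ 2)) by (apply Rmult_le_pos; nra).
  assert (0 <= l * (1 - l) * (F1 * v2 + F2 * v1 - 2 * f1 * f2)) by (apply Rmult_le_pos; nra).
  nra.
Qed.

Lemma one_le_mul_comb u1 u2 v1 v2 l :
  0 < u1 -> 0 < u2 -> 0 < v1 -> 0 < v2 -> 1 <= u1 * v1 -> 1 <= u2 * v2 -> 0 <= l <= 1 ->
  1 <= (l * u1 + (1 - l) * u2) * (l * v1 + (1 - l) * v2).
Proof.
  intros.
  assert (Hcross : 2 <= u1 * v2 + u2 * v1).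
  { assert (1 <= (u1 * v2) * (u2 * v1)) by nra.
    assert (0 < u1 * v2) by nra; assert (0 < u2 * v1) by nra.
    pose proof (pow2_ge_0 (u1 * v2 - u2 * v1)); nra. }
  assert (0 <= l ^ 2 * (u1 * v1 - 1)) by (apply Rmult_le_pos; nra).
  assert (0 <= (1 - l) ^ 2 * (u2 * v2 - 1)) by (apply Rmult_le_pos; nra).
  assert (0 <= l * (1 - l) * (u1 * v2 + u2 * v1 - 2)) by (apply Rmult_le_pos; nra).
  nra.
Qed.

(* Lagrange interpolation of the quadratic [l |-> u(l) v(l)] at [l = 0, 1/2, 1];
   the sum of the absolute values of its basis polynomials is at most [9/8]. *)
Lemma mul_comb_le u1 u2 v1 v2 A l :
  0 <= u1 -> 0 <= u2 -> 0 <= v1 -> 0 <= v2 -> u1 * v1 <= A -> u2 * v2 <= A ->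
  (u1 + u2) / 2 * ((v1 + v2) / 2) <= A -> 0 <= l <= 1 ->
  (l * u1 + (1 - l) * u2) * (l * v1 + (1 - l) * v2) <= 9 / 8 * A.
Proof.
  intros Hu1 Hu2 Hv1 Hv2 H1 H2 Hh Hl.
  replace ((l * u1 + (1 - l) * u2) * (l * v1 + (1 - l) * v2))
    with ((2 * l - 1) * (l - 1) * (u2 * v2) + 4 * l * (1 - l) * ((u1 + u2) / 2 * ((v1 + v2) / 2))
          + l * (2 * l - 1) * (u1 * v1)) by field.
  assert (0 <= u1 * v1) by nra; assert (0 <= u2 * v2) by nra.
  assert (0 <= 4 * l * (1 - l)) by nra.
  destruct (Rle_dec l (1/2)).
  - assert (0 <= (2 * l - 1) * (l - 1)) by nra.
    assert (0 <= - (l * (2 * l - 1))) by nra.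
    assert ((2 * l - 1) * (l - 1) + 4 * l * (1 - l) <= 9 / 8)
      by (pose proof (pow2_ge_0 (l - 1/4)); nra).
    nra.
  - assert (0 <= - ((2 * l - 1) * (l - 1))) by nra.
    assert (0 <= l * (2 * l - 1)) by nra.
    assert (l * (2 * l - 1) + 4 * l * (1 - l) <= 9 / 8)
      by (pose proof (pow2_ge_0 (l - 3/4)); nra).
    nra.
Qed.

Lemma inE_infty_comb P Q m1 m2 l : inE_infty P m1 -> inE_infty Q m2 -> 0 <= l <= 1 ->
  inE_infty (comb l P Q) (l * m1 + (1 - l) * m2).
Proof.
  unfold inE_infty; intros (Hu1 & Hv1 & Huv1 & Hf1 & Hg1 & Hm1 & Hm1')
    (Hu2 & Hv2 & Huv2 & Hf2 & Hg2 & Hm2 & Hm2') Hl; simpl.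
  repeat split; try nra.
  - apply one_le_mul_comb; auto.
  - apply sq_le_mul_comb; auto.
  - apply sq_le_mul_comb; auto.
Qed.

Section SegmentConcavity.

Variables (Bf : pt -> R -> R) (A' : R).
Hypothesis Bf_nonneg : forall Y N, inE A' Y N -> 0 <= Bf Y N.
Hypothesis Bf_mid : forall Y N Y1 N1 Y2 N2, inE A' Y N -> inE A' Y1 N1 -> inE A' Y2 N2 ->
  Y = ptavg Y1 Y2 -> 0 <= N - (N1 + N2) / 2 ->
  Bf Y N - / 2 * (Bf Y1 N1 + Bf Y2 N2)
    >= (N - (N1 + N2) / 2) * Rabs (pf Y) * Rabs (pg Y1 - pg Y2).

(* Along a segment the mass [N] is affine, so [d = 0] and the right side vanishes. *)
Lemma Bf_concave_segment P1 P2 m1 m2 l :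
  (forall mu, 0 <= mu <= 1 -> inE A' (comb mu P1 P2) (mu * m1 + (1 - mu) * m2)) ->
  0 <= l <= 1 ->
  l * Bf P1 m1 + (1 - l) * Bf P2 m2 <= Bf (comb l P1 P2) (l * m1 + (1 - l) * m2).
Proof.
  intros Hseg Hl.
  set (phi mu := Bf (comb mu P1 P2) (mu * m1 + (1 - mu) * m2)).
  replace (Bf P1 m1) with (phi 1) by (unfold phi; rewrite comb1; f_equal; ring).
  replace (Bf P2 m2) with (phi 0) by (unfold phi; rewrite comb0; f_equal; ring).
  apply (midpoint_concave_concave phi); auto; unfold phi.
  - intros x y Hx Hy.
    assert (Hxy : 0 <= (x + y) / 2 <= 1) by lra.
    pose proof (Bf_mid _ _ _ _ _ _ (Hseg _ Hxy) (Hseg _ Hx) (Hseg _ Hy)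
                  (comb_midpoint x y P1 P2)) as H.
    replace ((x + y) / 2 * m1 + (1 - (x + y) / 2) * m2
             - (x * m1 + (1 - x) * m2 + (y * m1 + (1 - y) * m2)) / 2) with 0 in H by field.
    specialize (H (Rle_refl 0)); lra.
  - intros x Hx; apply Bf_nonneg, Hseg, Hx.
Qed.

End SegmentConcavity.

(* [leafsum h r j] sums [h] over the [2^r] leaves [j * 2^r, ..., j * 2^r + 2^r - 1]
   below node [j] at height [r]. *)
Fixpoint leafsum (h : nat -> R) (r j : nat) : R :=
  match r with
  | O => h j
  | S r' => leafsum h r' (2 * j) + leafsum h r' (2 * j + 1)
  end.

Lemma leafsum_ext h1 h2 r j : (forall i, h1 i = h2 i) -> leafsum h1 r j = leafsum h2 r j.
Proof. intros H; revert j; induction r; intros j; simpl; auto; now rewrite !IHr. Qed.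

Lemma leafsum_le h1 h2 r j : (forall i, h1 i <= h2 i) -> leafsum h1 r j <= leafsum h2 r j.
Proof. intros H; revert j; induction r; intros j; simpl; auto; apply Rplus_le_compat; auto. Qed.

Lemma leafsum_lin a b h1 h2 r j :
  leafsum (fun i => a * h1 i + b * h2 i) r j = a * leafsum h1 r j + b * leafsum h2 r j.
Proof. revert j; induction r; intros j; simpl; auto; rewrite !IHr; ring. Qed.

Lemma leafsum_add h1 h2 r j :
  leafsum (fun i => h1 i + h2 i) r j = leafsum h1 r j + leafsum h2 r j.
Proof.
  rewrite (leafsum_ext _ (fun i => 1 * h1 i + 1 * h2 i)), leafsum_lin by (intros; ring).
  ring.
Qed.

Lemma leafsum_scal a h r j : leafsum (fun i => a * h i) r j = a * leafsum h r j.
Proof. revert j; induction r; intros j; simpl; auto; rewrite !IHr; ring. Qed.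

Lemma leafsum_const c r j : leafsum (fun _ => c) r j = 2 ^ r * c.
Proof. revert j; induction r; intros j; simpl; [ring|]; rewrite !IHr; ring. Qed.

Lemma leafsum_nonneg h r j : (forall i, 0 <= h i) -> 0 <= leafsum h r j.
Proof.
  intros H; rewrite <- (Rmult_0_r (2 ^ r)), <- (leafsum_const 0 r j).
  now apply leafsum_le.
Qed.

Lemma leafsum_pos h r j : (forall i, 0 < h i) -> 0 < leafsum h r j.
Proof. intros H; revert j; induction r; intros j; simpl; auto; apply Rplus_lt_0_compat; auto. Qed.

Lemma sumR_ext m f g : (forall i, (i < m)%nat -> f i = g i) -> sumR m f = sumR m g.
Proof.
  induction m; simpl; intros H; [reflexivity|].
  rewrite (H m (Nat.lt_succ_diag_r m)), IHm; [reflexivity|].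
  intros i Hi; apply H; lia.
Qed.

Lemma sumR_add a b f : sumR (a + b) f = sumR a f + sumR b (fun i => f (a + i)%nat).
Proof.
  induction b; simpl; [rewrite Nat.add_0_r; ring|].
  rewrite Nat.add_succ_r; simpl; rewrite IHb; ring.
Qed.

Lemma leafsum_sumR h r j : leafsum h r j = sumR (2 ^ r) (fun i => h (j * 2 ^ r + i)%nat).
Proof.
  revert j; induction r; intros j; cbn [leafsum].
  - simpl; rewrite Nat.mul_1_r, Nat.add_0_r; ring.
  - replace (2 ^ S r)%nat with (2 ^ r + 2 ^ r)%nat by (simpl; lia).
    rewrite sumR_add, !IHr; f_equal; apply sumR_ext; intros; f_equal; nia.
Qed.

Definition wmean (w h : nat -> R) (r j : nat) : R :=
  leafsum (fun i => w i * h i) r j / leafsum w r j.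

Definition lshare (w : nat -> R) (r j : nat) : R :=
  leafsum w r (2 * j) / leafsum w (S r) j.

Section PositiveWeights.

Variable w : nat -> R.
Hypothesis w_pos : forall i, 0 < w i.

Lemma lshare_mem r j : 0 <= lshare w r j <= 1.
Proof.
  unfold lshare; cbn [leafsum].
  pose proof (leafsum_pos w r (2 * j) w_pos); pose proof (leafsum_pos w r (2 * j + 1) w_pos).
  split; [apply div_nonneg; lra|].
  apply Rmult_le_reg_r with (leafsum w r (2 * j) + leafsum w r (2 * j + 1)); [lra|].
  unfold Rdiv; rewrite Rmult_assoc, Rinv_l; lra.
Qed.

Lemma wmean_leaf h j : wmean w h 0 j = h j.
Proof. unfold wmean; cbn [leafsum]; field; specialize (w_pos j); lra. Qed.

Lemma wmean_S h r j : wmean w h (S r) j =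
  lshare w r j * wmean w h r (2 * j) + (1 - lshare w r j) * wmean w h r (2 * j + 1).
Proof.
  unfold wmean, lshare; cbn [leafsum].
  pose proof (leafsum_pos w r (2 * j) w_pos); pose proof (leafsum_pos w r (2 * j + 1) w_pos).
  field; lra.
Qed.

Lemma wmean_le_twice_mean h r j : (forall i, 2/3 <= w i <= 4/3) -> (forall i, 0 <= h i) ->
  wmean w h r j <= 2 * (leafsum h r j / 2 ^ r).
Proof.
  intros Hw Hh; unfold wmean.
  assert (Hnum : leafsum (fun i => w i * h i) r j <= 4/3 * leafsum h r j).
  { rewrite <- (leafsum_scal (4/3) h r j); apply leafsum_le; intros i.
    apply Rmult_le_compat_r; [apply Hh | apply Hw]. }
  assert (Hden : 2 ^ r * (2/3) <= leafsum w r j).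
  { rewrite <- (leafsum_const (2/3) r j); apply leafsum_le; intros; apply Hw. }
  pose proof (pow2_pos r); pose proof (leafsum_nonneg h r j Hh).
  apply Rle_trans with (4/3 * leafsum h r j / (2 ^ r * (2/3))).
  - apply Rle_trans with (4/3 * leafsum h r j / leafsum w r j).
    + apply Rmult_le_compat_r; [left; apply Rinv_0_lt_compat; lra | exact Hnum].
    + apply Rmult_le_compat_l; [lra|]. apply Rinv_le_contravar; lra.
  - right; field; lra.
Qed.

End PositiveWeights.

Definition wmeanP (w : nat -> R) (L : nat -> pt) (r j : nat) : pt :=
  mkpt (wmean w (fun i => pf (L i)) r j) (wmean w (fun i => pg (L i)) r j)
       (wmean w (fun i => pF (L i)) r j) (wmean w (fun i => pG (L i)) r j)
       (wmean w (fun i => pu (L i)) r j) (wmean w (fun i => pv (L i)) r j).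

Lemma wmeanP_leaf w L j : (forall i, 0 < w i) -> wmeanP w L 0 j = L j.
Proof. intros Hw; apply pt_ext; simpl; apply wmean_leaf; auto. Qed.

Lemma wmeanP_S w L r j : (forall i, 0 < w i) -> wmeanP w L (S r) j =
  comb (lshare w r j) (wmeanP w L r (2 * j)) (wmeanP w L r (2 * j + 1)).
Proof. intros Hw; apply pt_ext; simpl; apply wmean_S; auto. Qed.

Lemma inE_infty_wmeanP w L ML r j : (forall i, 0 < w i) ->
  (forall i, inE_infty (L i) (ML i)) -> inE_infty (wmeanP w L r j) (wmean w ML r j).
Proof.
  intros Hw HL; revert j; induction r; intros j.
  - rewrite wmeanP_leaf, wmean_leaf; auto.
  - rewrite wmeanP_S, wmean_S by auto.
    apply inE_infty_comb; auto; apply lshare_mem; auto.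
Qed.

Definition tilt (c : R) (s : nat -> R) (i : nat) : R := 1 + c * s i.

Lemma wmean_tilt c s h r j : leafsum s r j = 0 ->
  wmean (tilt c s) h r j = (leafsum h r j + c * leafsum (fun i => s i * h i) r j) / 2 ^ r.
Proof.
  intros Hs; unfold wmean, tilt.
  rewrite (leafsum_ext (fun i => 1 + c * s i) (fun i => 1 * 1 + c * s i)),
    (leafsum_ext (fun i => (1 + c * s i) * h i) (fun i => 1 * h i + c * (s i * h i)))
    by (intros; ring).
  rewrite !leafsum_lin, leafsum_const, Hs; f_equal; ring.
Qed.

Lemma wmean_tilt_avg c s h r j : leafsum s r j = 0 ->
  (wmean (tilt c s) h r j + wmean (tilt (- c) s) h r j) / 2 = leafsum h r j / 2 ^ r.
Proof. intros Hs; rewrite !wmean_tilt by auto; field; apply pow_nonzero; lra. Qed.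

Lemma wmean_tilt_gap c s h a r j : leafsum s r j = 0 ->
  wmean (tilt c s) h r j - wmean (tilt (- c) s) h r j =
  2 * c * leafsum (fun i => s i * (h i - a)) r j / 2 ^ r.
Proof.
  intros Hs; rewrite !wmean_tilt by auto.
  rewrite (leafsum_ext (fun i => s i * (h i - a)) (fun i => 1 * (s i * h i) + - a * s i)),
    leafsum_lin, Hs
    by (intros; ring).
  field; apply pow_nonzero; lra.
Qed.

(* The signature is [Q/N] on the leaves where [d >= 0] and [-P/N] elsewhere, with
   [P] and [Q] the numbers of leaves of each kind and [N = P + Q]. *)
Lemma balanced_signature d r j : leafsum d r j = 0 ->
  exists s, (forall i, -1 <= s i <= 1) /\ leafsum s r j = 0 /\
    leafsum (fun i => s i * d i) r j = leafsum (fun i => Rabs (d i)) r j / 2.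
Proof.
  intros Hd.
  set (ind i := if Rle_dec 0 (d i) then 1 else 0).
  assert (Hind : forall i, ind i = 0 \/ ind i = 1)
    by (intros i; unfold ind; destruct (Rle_dec 0 (d i)); auto).
  set (N := 2 ^ r); set (P := leafsum ind r j); set (Q := leafsum (fun i => 1 - ind i) r j).
  assert (HN : 0 < N) by apply pow2_pos.
  assert (HPQ : P + Q = N).
  { unfold P, Q; rewrite <- leafsum_add.
    rewrite (leafsum_ext _ (fun _ => 1)), leafsum_const by (intros; ring); unfold N; ring. }
  assert (HP : 0 <= P) by (apply leafsum_nonneg; intros i; destruct (Hind i); lra).
  assert (HQ : 0 <= Q) by (apply leafsum_nonneg; intros i; destruct (Hind i); lra).
  exists (fun i => Q / N * ind i + - (P / N) * (1 - ind i)); split; [|split].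
  - intros i.
    assert (P / N <= 1 /\ Q / N <= 1) as [] by (split; apply Rmult_le_reg_r with N; auto;
      unfold Rdiv; rewrite Rmult_assoc, Rinv_l; lra).
    pose proof (div_nonneg P N HP HN); pose proof (div_nonneg Q N HQ HN).
    destruct (Hind i) as [E|E]; rewrite E; lra.
  - rewrite leafsum_lin; fold P Q; field; lra.
  - set (T1 := leafsum (fun i => ind i * d i) r j).
    set (T2 := leafsum (fun i => (1 - ind i) * - d i) r j).
    assert (Habs : leafsum (fun i => Rabs (d i)) r j = T1 + T2).
    { unfold T1, T2; rewrite <- leafsum_add; apply leafsum_ext; intros i; unfold ind.
      destruct (Rle_dec 0 (d i)); [rewrite Rabs_pos_eq | rewrite Rabs_left]; lra. }
    assert (HT : T1 - T2 = 0).
    { replace (T1 - T2) with (1 * T1 + -1 * T2) by ring.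
      unfold T1, T2; rewrite <- leafsum_lin, <- Hd; apply leafsum_ext; intros; ring. }
    rewrite (leafsum_ext _ (fun i => Q / N * (ind i * d i) + P / N * ((1 - ind i) * - d i)))
      by (intros; ring).
    rewrite leafsum_lin, Habs; fold T1 T2.
    replace T2 with T1 by lra; replace Q with (N - P) by lra; field; lra.
Qed.

Lemma tilt_third_mem s i : -1 <= s i <= 1 -> 2/3 <= tilt (1/3) s i <= 4/3 /\
  2/3 <= tilt (-(1/3)) s i <= 4/3.
Proof. unfold tilt; lra. Qed.

Section DyadicTree.

Variables (A : R) (n : nat) (X : nat -> nat -> pt) (M : nat -> nat -> R).
Hypothesis X_mem : forall k j, (k <= n)%nat -> (j < 2 ^ k)%nat -> inE A (X k j) (M k j).
Hypothesis X_avg : forall k j, (k < n)%nat -> (j < 2 ^ k)%nat ->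
  X k j = ptavg (X (S k) (2 * j)) (X (S k) (2 * j + 1)).

(* The leaves [X n i], extended beyond [i < 2^n] by [X n 0] so that every leaf is
   admissible; the extension is never summed over. *)
Definition leaf (i : nat) : pt := if Nat.ltb i (2 ^ n) then X n i else X n 0.
Definition leafM (i : nat) : R := if Nat.ltb i (2 ^ n) then M n i else M n 0.

Lemma leaf_eq i : (i < 2 ^ n)%nat -> leaf i = X n i.
Proof. intros Hi; unfold leaf; now rewrite (proj2 (Nat.ltb_lt _ _) Hi). Qed.

Lemma leafM_eq i : (i < 2 ^ n)%nat -> leafM i = M n i.
Proof. intros Hi; unfold leafM; now rewrite (proj2 (Nat.ltb_lt _ _) Hi). Qed.

Lemma leaf_inE_infty i : inE_infty (leaf i) (leafM i).
Proof.
  assert (H2n : (0 < 2 ^ n)%nat) by (apply Nat.neq_0_lt_0, Nat.pow_nonzero; lia).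
  unfold leaf, leafM; destruct (Nat.ltb_spec i (2 ^ n));
    apply inE_inE_infty with A; apply X_mem; auto.
Qed.

Lemma leafsum_affine (c : pt -> R) : (forall P Q, c (ptavg P Q) = (c P + c Q) / 2) ->
  forall r j, (r <= n)%nat -> (j < 2 ^ (n - r))%nat ->
  leafsum (fun i => c (leaf i)) r j = 2 ^ r * c (X (n - r)%nat j).
Proof.
  intros Hc; induction r as [|r IH]; intros j Hr Hj; cbn [leafsum].
  - rewrite Nat.sub_0_r in *; rewrite (leaf_eq j Hj); ring.
  - assert (Hpow : (2 ^ (n - r) = 2 * 2 ^ (n - S r))%nat)
      by (replace (n - r)%nat with (S (n - S r)) by lia; reflexivity).
    rewrite !IH, (X_avg (n - S r) j), Hc by lia.
    replace (S (n - S r)) with (n - r)%nat by lia; simpl; field.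
Qed.

Lemma leafsum_affine_root (c : pt -> R) : (forall P Q, c (ptavg P Q) = (c P + c Q) / 2) ->
  leafsum (fun i => c (leaf i)) n 0 / 2 ^ n = c (X 0 0).
Proof.
  intros Hc; rewrite (leafsum_affine c Hc), Nat.sub_diag by (rewrite ?Nat.sub_diag; simpl; lia).
  field; apply pow_nonzero; lra.
Qed.

Lemma leafsum_affine_centered (c : pt -> R) : (forall P Q, c (ptavg P Q) = (c P + c Q) / 2) ->
  leafsum (fun i => c (leaf i) - c (X 0 0)) n 0 = 0.
Proof.
  intros Hc.
  rewrite (leafsum_ext _ (fun i => 1 * c (leaf i) + - c (X 0 0) * 1)), leafsum_lin, leafsum_const
    by (intros; ring).
  rewrite <- (leafsum_affine_root c Hc); field; apply pow_nonzero; lra.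
Qed.

Lemma sumR_leaves (F : pt -> R -> R) :
  sumR (2 ^ n) (fun j => F (X n j) (M n j)) = leafsum (fun i => F (leaf i) (leafM i)) n 0.
Proof.
  rewrite leafsum_sumR; apply sumR_ext; intros i Hi.
  rewrite Nat.mul_0_l, Nat.add_0_l; now rewrite leaf_eq, leafM_eq.
Qed.

Section Weights.

Variable w : nat -> R.
Hypothesis w_mem : forall i, 2/3 <= w i <= 4/3.

Lemma w_pos i : 0 < w i.
Proof. specialize (w_mem i); lra. Qed.

Lemma wmean_affine_bounds (c : pt -> R) : (forall P Q, c (ptavg P Q) = (c P + c Q) / 2) ->
  (forall P m, inE_infty P m -> 0 < c P) ->
  forall r j, (r <= n)%nat -> (j < 2 ^ (n - r))%nat ->
  0 < wmean w (fun i => c (leaf i)) r j <= 2 * c (X (n - r)%nat j).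
Proof.
  intros Hc Hpos r j Hr Hj; split.
  - unfold wmean; apply Rdiv_lt_0_compat; apply leafsum_pos; [|apply w_pos].
    intros i; apply Rmult_lt_0_compat; [apply w_pos | apply (Hpos _ _ (leaf_inE_infty i))].
  - replace (c (X (n - r)%nat j)) with (leafsum (fun i => c (leaf i)) r j / 2 ^ r)
      by (rewrite (leafsum_affine c Hc r j Hr Hj); field; apply pow_nonzero; lra).
    apply wmean_le_twice_mean; auto.
    intros i; left; apply (Hpos _ _ (leaf_inE_infty i)).
Qed.

(* Both ends have [u], [v] at most twice those of the sibling nodes [X (n - r) _]; with
   the factor [9/8] of [mul_comb_le] this gives [4 * 9/8 * A = 9/2 * A]. *)
Lemma wmeanP_segment_inE r j mu : (S r <= n)%nat -> (j < 2 ^ (n - S r))%nat -> 0 <= mu <= 1 ->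
  inE (9/2 * A) (comb mu (wmeanP w leaf r (2 * j)) (wmeanP w leaf r (2 * j + 1)))
    (mu * wmean w leafM r (2 * j) + (1 - mu) * wmean w leafM r (2 * j + 1)).
Proof.
  intros Hr Hj Hmu.
  assert (Hpow : (2 ^ (n - r) = 2 * 2 ^ (n - S r))%nat)
    by (replace (n - r)%nat with (S (n - S r)) by lia; reflexivity).
  apply inE_infty_inE.
  { apply inE_infty_comb; auto; apply inE_infty_wmeanP; auto using w_pos, leaf_inE_infty. }
  assert (Hu : forall P m, inE_infty P m -> 0 < pu P) by (intros P m []; auto).
  assert (Hv : forall P m, inE_infty P m -> 0 < pv P) by (intros P m (? & ? & _); auto).
  pose proof (wmean_affine_bounds pu (fun _ _ => eq_refl) Hu r (2 * j) ltac:(lia) ltac:(lia)).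
  pose proof (wmean_affine_bounds pu (fun _ _ => eq_refl) Hu r (2 * j + 1) ltac:(lia) ltac:(lia)).
  pose proof (wmean_affine_bounds pv (fun _ _ => eq_refl) Hv r (2 * j) ltac:(lia) ltac:(lia)).
  pose proof (wmean_affine_bounds pv (fun _ _ => eq_refl) Hv r (2 * j + 1) ltac:(lia) ltac:(lia)).
  destruct (X_mem (n - r) (2 * j) ltac:(lia) ltac:(lia)) as (Hu1 & Hv1 & _ & HA1 & _).
  destruct (X_mem (n - r) (2 * j + 1) ltac:(lia) ltac:(lia)) as (Hu2 & Hv2 & _ & HA2 & _).
  destruct (X_mem (n - S r) j ltac:(lia) ltac:(lia)) as (_ & _ & _ & HA0 & _).
  rewrite (X_avg (n - S r) j) in HA0 by lia; cbn [ptavg pu pv] in HA0.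
  replace (S (n - S r)) with (n - r)%nat in HA0 by lia.
  pose proof (mul_comb_le _ _ _ _ A mu (Rlt_le _ _ Hu1) (Rlt_le _ _ Hu2) (Rlt_le _ _ Hv1)
                (Rlt_le _ _ Hv2) HA1 HA2 HA0 Hmu).
  cbn [comb wmeanP pu pv].
  match goal with |- ?U * ?V <= _ => apply Rle_trans with
    ((2 * (mu * pu (X (n - r)%nat (2 * j)) + (1 - mu) * pu (X (n - r)%nat (2 * j + 1)))) *
     (2 * (mu * pv (X (n - r)%nat (2 * j)) + (1 - mu) * pv (X (n - r)%nat (2 * j + 1))))) end.
  - apply Rmult_le_compat; nra.
  - lra.
Qed.

Lemma wmeanP_root_inE : (1 <= n)%nat -> inE (9/2 * A) (wmeanP w leaf n 0) (wmean w leafM n 0).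
Proof.
  intros Hn; replace n with (S (n - 1)) by lia.
  rewrite wmeanP_S, wmean_S by apply w_pos.
  replace 0%nat with (2 * 0)%nat at 2 4 by reflexivity.
  apply wmeanP_segment_inE; [lia | replace (n - S (n - 1))%nat with 0%nat by lia; simpl; lia |
    apply lshare_mem, w_pos].
Qed.

End Weights.

Section Jensen.

Variable Bf : pt -> R -> R.
Hypothesis Bf_nonneg : forall Y N, inE (9/2 * A) Y N -> 0 <= Bf Y N.
Hypothesis Bf_mid : forall Y N Y1 N1 Y2 N2,
  inE (9/2 * A) Y N -> inE (9/2 * A) Y1 N1 -> inE (9/2 * A) Y2 N2 ->
  Y = ptavg Y1 Y2 -> 0 <= N - (N1 + N2) / 2 ->
  Bf Y N - / 2 * (Bf Y1 N1 + Bf Y2 N2)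
    >= (N - (N1 + N2) / 2) * Rabs (pf Y) * Rabs (pg Y1 - pg Y2).

Lemma wmean_Bf_jensen w : (forall i, 2/3 <= w i <= 4/3) ->
  forall r j, (r <= n)%nat -> (j < 2 ^ (n - r))%nat ->
  leafsum (fun i => w i * Bf (leaf i) (leafM i)) r j <=
  leafsum w r j * Bf (wmeanP w leaf r j) (wmean w leafM r j).
Proof.
  intros Hw; induction r as [|r IH]; intros j Hr Hj.
  - cbn [leafsum]; rewrite wmeanP_leaf, wmean_leaf by (apply w_pos; auto); lra.
  - assert (Hpow : (2 ^ (n - r) = 2 * 2 ^ (n - S r))%nat)
      by (replace (n - r)%nat with (S (n - S r)) by lia; reflexivity).
    pose proof (IH (2 * j)%nat ltac:(lia) ltac:(lia)) as IH1.
    pose proof (IH (2 * j + 1)%nat ltac:(lia) ltac:(lia)) as IH2.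
    pose proof (Bf_concave_segment Bf (9/2 * A) Bf_nonneg Bf_mid _ _ _ _ _
      (fun mu => wmeanP_segment_inE w Hw r j mu Hr Hj) (lshare_mem w (w_pos w Hw) r j)) as Hconc.
    rewrite wmeanP_S, wmean_S by (apply w_pos; auto).
    assert (HW : 0 < leafsum w (S r) j) by (apply leafsum_pos, w_pos; auto).
    assert (Hl1 : leafsum w (S r) j * lshare w r j = leafsum w r (2 * j))
      by (unfold lshare; field; lra).
    assert (Hl2 : leafsum w (S r) j * (1 - lshare w r j) = leafsum w r (2 * j + 1))
      by (unfold lshare; cbn [leafsum] in *; field; lra).
    apply (Rmult_le_compat_l (leafsum w (S r) j)) in Hconc; [|lra].
    rewrite Rmult_plus_distr_l, <- !Rmult_assoc, Hl1, Hl2 in Hconc.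
    eapply Rle_trans; [|exact Hconc]; cbn [leafsum]; lra.
Qed.

Lemma wmean_Bf_jensen_root w : (forall i, 2/3 <= w i <= 4/3) ->
  wmean w (fun i => Bf (leaf i) (leafM i)) n 0 <= Bf (wmeanP w leaf n 0) (wmean w leafM n 0).
Proof.
  intros Hw; unfold wmean at 1.
  pose proof (leafsum_pos w n 0 (w_pos w Hw)).
  apply Rmult_le_reg_r with (leafsum w n 0); [lra|].
  unfold Rdiv; rewrite Rmult_assoc, Rinv_l, Rmult_1_r, Rmult_comm by lra.
  apply wmean_Bf_jensen; [auto | lia | rewrite Nat.sub_diag; simpl; lia].
Qed.

Lemma root_estimate s : (1 <= n)%nat -> (forall i, -1 <= s i <= 1) -> leafsum s n 0 = 0 ->
  0 <= M 0 0 - leafsum leafM n 0 / 2 ^ n ->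
  (M 0 0 - leafsum leafM n 0 / 2 ^ n) * Rabs (pf (X 0 0))
    * Rabs (pg (wmeanP (tilt (1/3) s) leaf n 0) - pg (wmeanP (tilt (-(1/3)) s) leaf n 0))
  <= Bf (X 0 0) (M 0 0) - leafsum (fun i => Bf (leaf i) (leafM i)) n 0 / 2 ^ n.
Proof.
  intros Hn Hs Hs0 Hd.
  assert (Hw1 : forall i, 2/3 <= tilt (1/3) s i <= 4/3)
    by (intros i; apply (tilt_third_mem s i (Hs i))).
  assert (Hw2 : forall i, 2/3 <= tilt (-(1/3)) s i <= 4/3)
    by (intros i; apply (tilt_third_mem s i (Hs i))).
  assert (Hsplit : X 0 0 = ptavg (wmeanP (tilt (1/3) s) leaf n 0) (wmeanP (tilt (-(1/3)) s) leaf n 0)).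
  { apply pt_ext; cbn [ptavg wmeanP pf pg pF pG pu pv];
      rewrite wmean_tilt_avg, leafsum_affine_root; auto. }
  rewrite <- (wmean_tilt_avg (1/3) s leafM n 0 Hs0) in Hd |- *.
  rewrite <- (wmean_tilt_avg (1/3) s (fun i => Bf (leaf i) (leafM i)) n 0 Hs0).
  pose proof (wmean_Bf_jensen_root _ Hw1); pose proof (wmean_Bf_jensen_root _ Hw2).
  assert (Hroot := X_mem 0 0 ltac:(lia) ltac:(simpl; lia)).
  assert (HA : 1 <= A) by (destruct Hroot as (_ & _ & ? & ? & _); lra).
  pose proof (Bf_mid _ _ _ _ _ _ (inE_le A (9/2 * A) _ _ ltac:(lra) Hroot)
    (wmeanP_root_inE _ Hw1 Hn) (wmeanP_root_inE _ Hw2 Hn) Hsplit Hd).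
  lra.
Qed.

Lemma dispersion_le : (1 <= n)%nat -> 0 <= M 0 0 - leafsum leafM n 0 / 2 ^ n ->
  (M 0 0 - leafsum leafM n 0 / 2 ^ n) * Rabs (pf (X 0 0))
    * (leafsum (fun i => Rabs (pg (leaf i) - pg (X 0 0))) n 0 / 2 ^ n)
  <= 3 * (Bf (X 0 0) (M 0 0) - leafsum (fun i => Bf (leaf i) (leafM i)) n 0 / 2 ^ n).
Proof.
  intros Hn Hd.
  destruct (balanced_signature _ n 0 (leafsum_affine_centered pg (fun _ _ => eq_refl)))
    as (s & Hs & Hs0 & Hsd).
  pose proof (root_estimate s Hn Hs Hs0 Hd) as Hest; cbn [wmeanP pg] in Hest.
  rewrite (wmean_tilt_gap _ _ _ (pg (X 0 0))), Hsd in Hest by exact Hs0.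
  set (T := leafsum (fun i => Rabs (pg (leaf i) - pg (X 0 0))) n 0) in *.
  assert (HT : 0 <= T / 2 ^ n)
    by (apply div_nonneg; [apply leafsum_nonneg; intros; apply Rabs_pos | apply pow2_pos]).
  replace (2 * (1 / 3) * (T / 2) / 2 ^ n) with (/ 3 * (T / 2 ^ n)) in Hest
    by (field; apply pow_nonzero; lra).
  rewrite (Rabs_pos_eq (/ 3 * _)), <- Rmult_assoc, (Rmult_comm _ (/ 3)), !Rmult_assoc in Hest
    by lra.
  rewrite !Rmult_assoc; lra.
Qed.

End Jensen.
End DyadicTree.

Theorem lemma8p3 (C : R) (B : R -> pt -> R -> R) (A : R) (n : nat)
  (X : nat -> nat -> pt) (M : nat -> nat -> R) :
  0 < C ->
  (forall A0, 1 < A0 -> forall Y N, inE A0 Y N ->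
     0 <= B A0 Y N /\ B A0 Y N <= C * A0 * sqrt (pF Y) * sqrt (pG Y)) ->
  (forall A0, 1 < A0 -> forall Y N Y1 N1 Y2 N2,
     inE A0 Y N -> inE A0 Y1 N1 -> inE A0 Y2 N2 ->
     Y = ptavg Y1 Y2 -> 0 <= N - (N1 + N2) / 2 ->
     B A0 Y N - / 2 * (B A0 Y1 N1 + B A0 Y2 N2)
       >= (N - (N1 + N2) / 2) * Rabs (pf Y) * Rabs (pg Y1 - pg Y2)) ->
  1 < A -> (1 <= n)%nat ->
  (forall k j, (k <= n)%nat -> (j < 2 ^ k)%nat -> inE A (X k j) (M k j)) ->
  (forall k j, (k < n)%nat -> (j < 2 ^ k)%nat ->
     X k j = ptavg (X (S k) (2 * j)%nat) (X (S k) (2 * j + 1)%nat)) ->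
  (forall k j, (1 <= k)%nat -> (k < n)%nat -> (j < 2 ^ k)%nat ->
     M k j = (M (S k) (2 * j)%nat + M (S k) (2 * j + 1)%nat) / 2) ->
  0 <= M 0%nat 0%nat - sumR (2 ^ n)%nat (fun j => M n j) / 2 ^ n ->
  (M 0%nat 0%nat - sumR (2 ^ n)%nat (fun j => M n j) / 2 ^ n)
    * Rabs (pf (X 0%nat 0%nat))
    * (sumR (2 ^ n)%nat (fun j => Rabs (pg (X n j) - pg (X 0%nat 0%nat))) / 2 ^ n)
  <= 36 * (B (9 / 2 * A) (X 0%nat 0%nat) (M 0%nat 0%nat)
           - sumR (2 ^ n)%nat (fun j => B (9 / 2 * A) (X n j) (M n j)) / 2 ^ n).
Proof.
  intros _ HB_bound HB_mid HA Hn Hmem Havg _ Hd.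
  assert (HA' : 1 < 9/2 * A) by lra.
  assert (HB_nonneg : forall Y N, inE (9/2 * A) Y N -> 0 <= B (9/2 * A) Y N)
    by (intros Y N HY; apply (HB_bound _ HA' _ _ HY)).
  rewrite (sumR_leaves n X M (fun _ m => m)) in Hd |- *.
  rewrite (sumR_leaves n X M (B (9/2 * A))).
  rewrite (sumR_leaves n X M (fun P _ => Rabs (pg P - pg (X 0%nat 0%nat)))).
  pose proof (dispersion_le A n X M Hmem Havg _ HB_nonneg (HB_mid _ HA') Hn Hd) as Hdisp.
  change (fun i => leafM n M i) with (leafM n M) in Hd |- *.
  assert (0 <= (M 0%nat 0%nat - leafsum (leafM n M) n 0 / 2 ^ n) * Rabs (pf (X 0%nat 0%nat))
    * (leafsum (fun i => Rabs (pg (leaf n X i) - pg (X 0%nat 0%nat))) n 0 / 2 ^ n)).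
  { apply Rmult_le_pos; [apply Rmult_le_pos; [exact Hd | apply Rabs_pos]|].
    apply div_nonneg; [apply leafsum_nonneg; intros; apply Rabs_pos | apply pow2_pos]. }
  lra.
Qed.
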